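(* Let $d\ge1$ and let $X_1,\dots,X_d$ be pairwise independent random variables with $X_i\sim\mathrm{Bernoulli}(p_i)$. Let $\tilde X_1,\dots,\tilde X_d$ be mutually independent with $\tilde X_i$ equal in distribution to $X_i$. Set $Z=\sum_{i=1}^dX_i$ and $\tilde Z=\sum_{i=1}^d\tilde X_i$. Then $\mathbb{P}(Z>0)\ge\frac12\mathbb{P}(\tilde Z>0)$. *)

From HB Require Import structures.
From mathcomp Require Import all_boot all_order all_algebra.
From mathcomp Require Import all_classical all_reals all_analysis.
Set Implicit Arguments. Unset Strict Implicit. Unset Printing Implicit Defensive.
Import Order.TTheory GRing.Theory Num.Theory.
Local Open Scope classical_set_scope.
Local Open Scope ring_scope.

Definition pairwise_independent d d' (T : measurableType d)
  (T' : measurableType d') (R : realType) (P : probability T R)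
  (I : finType) (X : I -> {RV P >-> T'}) : Prop :=
  forall i j : I, i != j ->
  forall A B : set T', measurable A -> measurable B ->
  P (X i @^-1` A `&` X j @^-1` B) = (P (X i @^-1` A) * P (X j @^-1` B))%E.

Definition mutually_independent d d' (T : measurableType d)
  (T' : measurableType d') (R : realType) (P : probability T R)
  (I : finType) (X : I -> {RV P >-> T'}) : Prop :=
  forall (S : {set I}) (A : I -> set T'), (forall i, measurable (A i)) ->
  P (\bigcap_(i in [set i | i \in S]) (X i @^-1` A i)) =
  (\prod_(i in S) P (X i @^-1` A i))%E.

From mathcomp Require Import all_boot all_order all_algebra.
From mathcomp Require Import all_classical all_reals all_analysis.
From mathcomp Require Import ring lra.
Set Implicit Arguments. Unset Strict Implicit.
Import Order.TTheory GRing.Theory Num.Theory.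
Local Open Scope classical_set_scope.
Local Open Scope ring_scope.

(* The law of (X_1, ..., X_d) is a weight function q on {0,1}^d, and Z is the
   number of ones of the outcome vector.  Since 1_{k > 0} >= 2ak - a^2 k^2
   for every integer k (it is 1 - (1 - ak)^2 when k > 0), we get
   P(Z > 0) >= 2a E[Z] - a^2 E[Z^2].  With s = sum_i p_i, E[Z] = s and, by pairwise
   independence, E[Z^2] = s + sum_{i <> j} p_i p_j <= s + s^2; the choice
   a = 1/(1+s) gives P(Z > 0) >= s/(1+s).  On the other hand
   P(Z~ > 0) <= min(1, E[Z~]) = min(1, s), and min(1, s)/2 <= s/(1+s). *)

Definition ntrue (I : finType) (v : {ffun I -> bool}) : nat := \sum_i v i.

Section WeightedCounts.
Variables (R : realType) (I : finType) (q : {ffun I -> bool} -> R).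

Lemma sum_weighted_ntrue :
  \sum_v q v * (ntrue v)%:R = \sum_i \sum_(v : {ffun I -> bool} | v i) q v.
Proof.
under eq_bigr do rewrite natr_sum mulr_sumr.
rewrite exchange_big; apply: eq_bigr => i _.
rewrite [RHS]big_mkcond; apply: eq_bigr => v _.
by case: (v i); rewrite ?mulr1 ?mulr0.
Qed.

Lemma sum_weighted_ntrue_sqr :
  \sum_v q v * (ntrue v)%:R ^+ 2 =
  \sum_i \sum_j \sum_(v : {ffun I -> bool} | v i && v j) q v.
Proof.
under eq_bigr do rewrite expr2 natr_sum mulr_suml mulr_sumr.
rewrite exchange_big; apply: eq_bigr => i _.
under eq_bigr do rewrite !mulr_sumr.
rewrite exchange_big; apply: eq_bigr => j _.
rewrite [RHS]big_mkcond; apply: eq_bigr => v _.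
by case: (v i); case: (v j); rewrite /= ?mulr1 ?mulr0 ?mul0r.
Qed.

Hypothesis q_ge0 : forall v, 0 <= q v.

Lemma weight_ntrue_gt0_ge_moments (a : R) :
  2 * a * (\sum_v q v * (ntrue v)%:R) - a ^+ 2 * (\sum_v q v * (ntrue v)%:R ^+ 2)
  <= \sum_(v : {ffun I -> bool} | (0 < ntrue v)%N) q v.
Proof.
rewrite !mulr_sumr -sumrB [leRHS]big_mkcond; apply: ler_sum => v _.
case: (ntrue v) => [|k] /=; first by rewrite !mulr0 expr0n /= !mulr0 subr0.
rewrite -subr_ge0.
have -> : q v - (2 * a * (q v * k.+1%:R) - a ^+ 2 * (q v * k.+1%:R ^+ 2)) =
          q v * (1 - a * k.+1%:R) ^+ 2 by ring.
by rewrite mulr_ge0 ?sqr_ge0.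
Qed.

Lemma weight_ntrue_gt0_le_mean :
  \sum_(v : {ffun I -> bool} | (0 < ntrue v)%N) q v <= \sum_v q v * (ntrue v)%:R.
Proof.
rewrite big_mkcond; apply: ler_sum => v _.
case: (ntrue v) => [|k] /=; first by rewrite mulr0.
by rewrite -[X in X <= _]mulr1 ler_wpM2l // ler1n.
Qed.

End WeightedCounts.

Section BooleanFamily.
Variables (R : realType) (d : measure_display) (T : measurableType d)
  (mu : probability T R) (I : finType) (X : I -> {RV mu >-> bool}).

Definition outcome t : {ffun I -> bool} := [ffun i => X i t].

Lemma outcomeE t i : outcome t i = X i t.
Proof. exact: ffunE. Qed.

Lemma natr_ntrue_outcome t : (ntrue (outcome t))%:R = \sum_i ((X i t)%:R : R).
Proof. by rewrite natr_sum; apply: eq_bigr => i _; rewrite outcomeE. Qed.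

Definition outcome_pmf v : R := fine (mu (outcome @^-1` [set v])).

Lemma measurable_outcome_fiber v : measurable (outcome @^-1` [set v]).
Proof.
have -> : outcome @^-1` [set v] = \bigcap_(i in [set: I]) (X i @^-1` [set v i]).
  apply/seteqP; split => t /=.
  - by move=> <- i _; rewrite /preimage /= ffunE.
  - by move=> Hv; apply/ffunP => i; rewrite ffunE; exact: Hv.
apply: fin_bigcap_measurable; first exact: finite_finset.
by move=> i _; rewrite -[X in measurable X]setTI; exact: measurable_funP.
Qed.

Lemma outcome_pmfE v : (outcome_pmf v)%:E = mu (outcome @^-1` [set v]).
Proof. by rewrite fineK // fin_num_measure //; exact: measurable_outcome_fiber. Qed.

Lemma outcome_pmf_ge0 v : 0 <= outcome_pmf v.
Proof. exact: fine_ge0. Qed.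

Lemma outcome_preimageE (F : pred {ffun I -> bool}) :
  [set t | F (outcome t)] = \bigcup_(v in [set` F]) outcome @^-1` [set v].
Proof.
apply/seteqP; split => t /=.
- by move=> Ft; exists (outcome t); rewrite //= mem_setE.
- by case=> v Fv; rewrite /preimage /= => ->.
Qed.

Lemma measurable_outcome_preimage (F : pred {ffun I -> bool}) :
  measurable [set t | F (outcome t)].
Proof.
rewrite outcome_preimageE; apply: fin_bigcup_measurable; first exact: finite_finset.
by move=> v _; exact: measurable_outcome_fiber.
Qed.

Lemma outcome_probE (F : pred {ffun I -> bool}) :
  mu [set t | F (outcome t)] = (\sum_(v : {ffun I -> bool} | F v) outcome_pmf v)%:E.
Proof.
rewrite -sumEFin.
under eq_bigr do rewrite outcome_pmfE.
rewrite bigfs ?index_enum_uniq //; last by move=> v _; rewrite mem_index_enum.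
rewrite outcome_preimageE measure_fin_bigcup //.
- by move=> v w _ _ [t [/= <- <-]].
- by move=> v _; exact: measurable_outcome_fiber.
Qed.

Lemma prob_ntrue_gt0_le1 :
  \sum_(v : {ffun I -> bool} | (0 < ntrue v)%N) outcome_pmf v <= 1.
Proof.
rewrite -lee_fin -(outcome_probE (fun v => 0 < ntrue v)%N).
apply: probability_le1.
exact: (measurable_outcome_preimage (fun v => 0 < ntrue v)%N).
Qed.

Lemma outcome_prob_true i :
  mu (X i @^-1` [set true]) = (\sum_(v : {ffun I -> bool} | v i) outcome_pmf v)%:E.
Proof.
rewrite -(outcome_probE (fun v => v i)); congr (mu _).
by apply/seteqP; split => t /=; rewrite ffunE.
Qed.

Lemma outcome_prob_true2 i j :
  mu (X i @^-1` [set true] `&` X j @^-1` [set true]) =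
  (\sum_(v : {ffun I -> bool} | v i && v j) outcome_pmf v)%:E.
Proof.
rewrite -(outcome_probE (fun v => v i && v j)); congr (mu _).
apply/seteqP; split => t /=; rewrite !ffunE; first by case=> -> ->.
by case/andP=> -> ->.
Qed.

Lemma outcome_prob_ntrue_gt0 :
  mu [set t | 0 < \sum_i ((X i t)%:R : R)] =
  (\sum_(v : {ffun I -> bool} | (0 < ntrue v)%N) outcome_pmf v)%:E.
Proof.
rewrite -(outcome_probE (fun v => (0 < ntrue v)%N)); congr (mu _).
by apply/funext => t /=; rewrite -(ltr0n R) natr_ntrue_outcome.
Qed.

Variable p : I -> R.
Hypothesis prob_true : forall i, mu (X i @^-1` [set true]) = (p i)%:E.

Let s := \sum_i p i.

Lemma success_prob_ge0 i : 0 <= p i.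
Proof. by rewrite -lee_fin -prob_true. Qed.

Lemma outcome_pmf_true i : \sum_(v : {ffun I -> bool} | v i) outcome_pmf v = p i.
Proof. by apply/EFin_inj; rewrite -outcome_prob_true. Qed.

Lemma mean_ntrue : \sum_v outcome_pmf v * (ntrue v)%:R = s.
Proof.
by rewrite sum_weighted_ntrue; apply: eq_bigr => i _; exact: outcome_pmf_true.
Qed.

Lemma prob_ntrue_gt0_le_mean :
  \sum_(v : {ffun I -> bool} | (0 < ntrue v)%N) outcome_pmf v <= s.
Proof. rewrite -mean_ntrue; exact/weight_ntrue_gt0_le_mean/outcome_pmf_ge0. Qed.

Hypothesis pairX : pairwise_independent X.

Lemma second_moment_ntrue_le :
  \sum_v outcome_pmf v * (ntrue v)%:R ^+ 2 <= s + s ^+ 2.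
Proof.
rewrite sum_weighted_ntrue_sqr.
rewrite [leRHS](_ : _ = \sum_i \sum_j ((i == j)%:R * p i + p i * p j)).
  apply: ler_sum => i _; apply: ler_sum => j _.
  have [<-|ij] := eqVneq i j.
    by rewrite (eq_bigl _ _ (fun v => andbb _)) outcome_pmf_true mul1r lerDl
      mulr_ge0 ?success_prob_ge0.
  suff -> : \sum_(v : {ffun I -> bool} | v i && v j) outcome_pmf v = p i * p j.
    by rewrite mul0r add0r.
  apply/EFin_inj; rewrite -outcome_prob_true2 EFinM -!prob_true; exact: pairX.
under eq_bigr do rewrite big_split /=.
rewrite big_split /= expr2 mulr_suml.
congr (_ + _); last by apply: eq_bigr => i _; rewrite mulr_sumr.
apply: eq_bigr => i _; rewrite (bigD1 i) //= eqxx mul1r big1 ?addr0 // => j.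
by rewrite eq_sym => /negbTE ->; rewrite mul0r.
Qed.

Lemma prob_ntrue_gt0_ge :
  s / (1 + s) <= \sum_(v : {ffun I -> bool} | (0 < ntrue v)%N) outcome_pmf v.
Proof.
have s_ge0 : 0 <= s by apply: sumr_ge0 => i _; exact: success_prob_ge0.
have s1_gt0 : 0 < 1 + s by rewrite ltr_pwDl.
set a := (1 + s)^-1.
apply: le_trans (weight_ntrue_gt0_ge_moments outcome_pmf_ge0 a).
rewrite mean_ntrue.
apply: (@le_trans _ _ (2 * a * s - a ^+ 2 * (s + s ^+ 2))); last first.
  by rewrite lerD2l lerN2 ler_wpM2l ?sqr_ge0 ?second_moment_ntrue_le.
have a_s1 : a * (1 + s) = 1 by rewrite mulVf // gt_eqF.
have -> : a ^+ 2 * (s + s ^+ 2) = a * s * (a * (1 + s)) by ring.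
by rewrite a_s1 mulr1 [s / _]mulrC -mulrA mulr_natl mulr2n addrK.
Qed.

End BooleanFamily.

Lemma half_le_div1D (R : realFieldType) (s y : R) :
  0 <= s -> y <= s -> y <= 1 -> 2^-1 * y <= s / (1 + s).
Proof.
move=> s_ge0 ys y1; have s1_gt0 : 0 < 1 + s by rewrite ltr_pwDl.
rewrite ler_pdivlMr // -mulrA ler_pdivrMl //; nra.
Qed.

Lemma bernoulli_prob_true (R : realType) d (T : measurableType d)
  (P : probability T R) (Y : {mfun T >-> bool}) (p : R) :
  0 <= p <= 1 -> distribution P Y =1 bernoulli_prob p ->
  P (Y @^-1` [set true]) = p%:E.
Proof.
move=> p01 /(_ [set true]); rewrite /distribution /pushforward /= => ->.
by rewrite bernoulli_probE // !diracE mem_set //= memNset // mule1 mule0 adde0.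
Qed.

Theorem proposition10 (R : realType) (n : nat) (hn : (0 < n)%N)
  (p : 'I_n -> R) (hp : forall i, 0 <= p i <= 1)
  (dT : measure_display) (T : measurableType dT) (P : probability T R)
  (X : 'I_n -> {RV P >-> bool})
  (hX : forall i, distribution P (X i) =1 bernoulli_prob (p i))
  (hpair : pairwise_independent X)
  (dT' : measure_display) (T' : measurableType dT') (P' : probability T' R)
  (Xt : 'I_n -> {RV P' >-> bool})
  (hXt : forall i, distribution P' (Xt i) =1 distribution P (X i))
  (hmut : mutually_independent Xt) :
  let Z := fun t => \sum_(i < n) ((X i t : bool)%:R : R) in
  let Zt := fun t => \sum_(i < n) ((Xt i t : bool)%:R : R) in
  (P [set t | (0 < Z t)%R] >= (2^-1)%:E * P' [set t | (0 < Zt t)%R])%E.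
Proof.
cbv zeta.
have probX i : P (X i @^-1` [set true]) = (p i)%:E by exact: bernoulli_prob_true.
have probXt i : P' (Xt i @^-1` [set true]) = (p i)%:E.
  by rewrite -probX -[RHS](hXt i [set true]).
rewrite !outcome_prob_ntrue_gt0 -EFinM lee_fin.
apply: le_trans (prob_ntrue_gt0_ge probX hpair).
apply: half_le_div1D.
- by apply: sumr_ge0 => i _; case/andP: (hp i).
- exact: prob_ntrue_gt0_le_mean.
- exact: prob_ntrue_gt0_le1.
Qed.
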